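(* Let $I\subset\mathbb{R}$ be an interval, $\psi:I\to\mathbb{R}$ a non-decreasing convex function, $n\ge2$, and $a=(a_1,\dots,a_n)\in I^n$ a convex sequence (i.e. $(\Delta a_i)_{i=1}^{n-1}$ non-decreasing). Let $p=(p_1,\dots,p_n)\in[0,\infty)^n$ with $P_n=\sum p_i>0$ and $\frac1{P_n}\sum_{i=1}^n p_i i<n$. Set $m=\left\lfloor \frac1{P_n}\sum_{i=1}^n p_i i\right\rfloor$ (ordinary floor) and, for integers $u<v$, $$\Phi(u,v)=\Big(\sum_{i=1}^n\frac{i-u}{v-u}p_i\Big)\psi(a_v)+\Big(\sum_{i=1}^n\frac{v-i}{v-u}p_i\Big)\psi(a_u).$$ Then $$\Phi(m,m+1)\le\sum_{i=1}^n p_i\psi(a_i)\le\Phi(1,n).$$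
   Context: For a real sequence $(x_i)$, $\Delta x_i=x_{i+1}-x_i$. *)

From HB Require Import structures.
From mathcomp Require Import all_boot all_order all_algebra.
From mathcomp Require Import reals.
Set Implicit Arguments. Unset Strict Implicit. Unset Printing Implicit Defensive.
Import Order.TTheory GRing.Theory Num.Theory.
Local Open Scope ring_scope.

Definition nondecreasing_on (R : realType) (I : interval R) (psi : R -> R) :=
  forall x y, x \in I -> y \in I -> x <= y -> psi x <= psi y.

Definition convex_on (R : realType) (I : interval R) (psi : R -> R) :=
  forall x y t, x \in I -> y \in I -> 0 <= t -> t <= 1 ->
    psi (t * x + (1 - t) * y) <= t * psi x + (1 - t) * psi y.

Definition convex_seq (R : realType) (n : nat) (a : nat -> R) :=
  forall i, (1 <= i)%N -> (i.+2 <= n)%N ->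
    a i.+1 - a i <= a i.+2 - a i.+1.

Definition Psum (R : realType) (n : nat) (p : nat -> R) : R :=
  \sum_(1 <= i < n.+1) p i.

Definition Phi (R : realType) (n : nat) (p a : nat -> R) (psi : R -> R)
    (u v : nat) : R :=
  (\sum_(1 <= i < n.+1) (i%:R - u%:R) / (v%:R - u%:R) * p i) * psi (a v)
  + (\sum_(1 <= i < n.+1) (v%:R - i%:R) / (v%:R - u%:R) * p i) * psi (a u).

From HB Require Import structures.
From mathcomp Require Import all_boot all_order all_algebra.
From mathcomp Require Import reals.
From mathcomp Require Import ring lra zify.
Import Order.TTheory GRing.Theory Num.Theory.
Local Open Scope ring_scope.

(* Both bounds are termwise comparisons: writing
   [interp u v y i] for the value at [i] of the affine interpolation of
   [y] through the nodes [u] and [v], we have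
   [Phi n p a psi u v = \sum_i p_i * interp u v (psi \o a) i].
   The whole argument rests on the three-point inequality for a convex
   sequence [b] on [1..n]: for [j <= k <= l],
   [(l - j) b_k <= (l - k) b_j + (k - j) b_l]; it follows by telescoping
   the (non-decreasing) increments of [b].  Consequently
   - a convex sequence lies above the secant through two consecutive
     nodes [m, m+1] (at every [i] in [1..n]), and
   - it lies below the chord through the endpoints [1] and [n].
   Lower bound: [psi \o a] is itself a convex sequence (psi is convex and
   non-decreasing), and [1 <= m < n] because the weighted mean index lies
   in [[1, n)], so the first fact applies to [psi \o a].
   Upper bound: [a_i] lies below its chord, so by monotonicity and then
   convexity of [psi], [psi (a_i)] lies below the chord of [psi \o a]. *)

Lemma itv_between {d} {T : porderType d} {I : interval T} {x y z : T} :
  x \in I -> y \in I -> (x <= z)%O -> (z <= y)%O -> z \in I.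
Proof.
case: I => l r; rewrite !itv_boundlr => /andP[lx _] /andP[_ yr] xz zy.
apply/andP; split; first by apply: (le_trans lx); rewrite leBSide.
by apply: le_trans yr; rewrite leBSide.
Qed.

Lemma itv_convex_comb {R : realFieldType} {I : interval R} {x y t : R} :
  x \in I -> y \in I -> 0 <= t -> t <= 1 -> t * x + (1 - t) * y \in I.
Proof.
move=> xI yI t0 t1; have [xy|yx] := leP x y.
  by apply: (itv_between xI yI); nra.
by apply: (itv_between yI xI); nra.
Qed.

Definition weight (R : realFieldType) (u v x : nat) : R :=
  (x%:R - u%:R) / (v%:R - u%:R).

Definition interp (R : realFieldType) (u v : nat) (y : nat -> R) (x : nat) : R :=
  weight R u v x * y v + (1 - weight R u v x) * y u.

Lemma weight_ge0 (R : realFieldType) u v x : (u < v)%N -> (u <= x)%N ->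
  0 <= weight R u v x.
Proof.
by move=> uv ux; rewrite /weight divr_ge0 // subr_ge0 ler_nat // ltnW.
Qed.

Lemma weight_le1 (R : realFieldType) u v x : (u < v)%N -> (x <= v)%N ->
  weight R u v x <= 1.
Proof.
move=> uv xv; have vu : (0 : R) < v%:R - u%:R by rewrite subr_gt0 ltr_nat.
by rewrite /weight ler_pdivrMr // mul1r lerB // ler_nat.
Qed.

Section ConvexSequences.
Context {R : realType} {n : nat} {b : nat -> R}.
Hypothesis b_convex : convex_seq n b.

Lemma convex_seq_incr_mono j k : (1 <= j)%N -> ((j + k).+1 <= n)%N ->
  b j.+1 - b j <= b (j + k).+1 - b (j + k).
Proof.
move=> j1; elim: k => [|k IH] kn; first by rewrite addn0.
apply: le_trans (IH _) _; first lia.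
by rewrite addnS; apply: b_convex; lia.
Qed.

Lemma convex_seq_incr_before j k : (1 <= j <= k)%N -> (k < n)%N ->
  b k - b j <= (k - j)%:R * (b k.+1 - b k).
Proof.
move=> /andP[j1 jk] kn; rewrite -(telescope_sumr _ jk) mulr_natl.
rewrite -sumr_const_nat; apply: ler_sum_nat => t /andP[jt tk].
have [s ks] : exists s, k = (t + s)%N by exists (k - t)%N; lia.
rewrite ks; apply: convex_seq_incr_mono; lia.
Qed.

Lemma convex_seq_incr_after k l : (1 <= k <= l)%N -> (l <= n)%N ->
  (l - k)%:R * (b k.+1 - b k) <= b l - b k.
Proof.
move=> /andP[k1 kl] ln; rewrite -(telescope_sumr _ kl) mulr_natl.
rewrite -sumr_const_nat; apply: ler_sum_nat => t /andP[kt tl].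
have [s ts] : exists s, t = (k + s)%N by exists (t - k)%N; lia.
rewrite ts; apply: convex_seq_incr_mono; lia.
Qed.

Lemma convex_seq_three_point j k l : (1 <= j <= k)%N -> (k <= l <= n)%N ->
  (l%:R - j%:R) * b k <= (l%:R - k%:R) * b j + (k%:R - j%:R) * b l.
Proof.
move=> /andP[j1 jk] /andP[kl ln].
have [->|k_neq_l] := eqVneq k l; first by lra.
have before := @convex_seq_incr_before j k ltac:(lia) ltac:(lia).
have after := @convex_seq_incr_after k l ltac:(lia) ln.
rewrite !natrB // in before after.
have lk0 : (0 : R) <= l%:R - k%:R by rewrite subr_ge0 ler_nat.
have kj0 : (0 : R) <= k%:R - j%:R by rewrite subr_ge0 ler_nat.
have := ler_wpM2l lk0 before; have := ler_wpM2l kj0 after; nra.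
Qed.

Lemma convex_seq_below_chord j k l : (1 <= j <= k)%N -> (k <= l <= n)%N ->
  (j < l)%N -> b k <= interp R j l b k.
Proof.
move=> jk kl jl; have lj : (0 : R) < l%:R - j%:R by rewrite subr_gt0 ltr_nat.
rewrite -(ler_pM2l lj) /interp /weight.
have -> : (l%:R - j%:R) * ((k%:R - j%:R) / (l%:R - j%:R) * b l
            + (1 - (k%:R - j%:R) / (l%:R - j%:R)) * b j)
          = (l%:R - k%:R) * b j + (k%:R - j%:R) * b l.
  by field; rewrite lt0r_neq0.
exact: convex_seq_three_point.
Qed.

Lemma convex_seq_above_secant m i : (1 <= m)%N -> (m < n)%N ->
  (1 <= i <= n)%N -> interp R m m.+1 b i <= b i.
Proof.
move=> m1 mn /andP[i1 iN].
have -> : interp R m m.+1 b i = (i%:R - m%:R) * b m.+1 + (m%:R + 1 - i%:R) * b m.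
  by rewrite /interp /weight -addn1 natrD addrAC subrr add0r divr1; ring.
have [mi|im] := ltnP m i.
  have := @convex_seq_three_point m m.+1 i ltac:(lia) ltac:(lia).
  by rewrite -addn1 natrD; lra.
have := @convex_seq_three_point i m m.+1 ltac:(lia) ltac:(lia).
by rewrite -addn1 natrD; lra.
Qed.

End ConvexSequences.

Section ConvexNondecreasingImage.
Context {R : realType} {I : interval R} {psi : R -> R} {n : nat} {a : nat -> R}.
Hypotheses (psi_mono : nondecreasing_on I psi) (psi_convex : convex_on I psi).
Hypothesis a_in_I : forall i, (1 <= i <= n)%N -> a i \in I.
Hypothesis a_convex : convex_seq n a.

(* A convex non-decreasing function maps convex sequences to convex
   sequences: [psi (a_(i+1)) <= psi ((a_i + a_(i+2))/2)
   <= (psi (a_i) + psi (a_(i+2)))/2]. *)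
Lemma convex_seq_comp : convex_seq n (psi \o a).
Proof.
move=> i i1 i2; rewrite /=.
have [ai ai1 ai2] : [/\ a i \in I, a i.+1 \in I & a i.+2 \in I].
  by split; apply: a_in_I; lia.
have half0 : (0 : R) <= 2^-1 by rewrite invr_ge0.
have half1 : (2^-1 : R) <= 1 by rewrite invf_le1 // ler1n.
have mid_le : a i.+1 <= 2^-1 * a i + (1 - 2^-1) * a i.+2.
  by have := a_convex i i1 i2; lra.
have := psi_mono _ _ ai1 (itv_convex_comb ai ai2 half0 half1) mid_le.
have := psi_convex _ _ _ ai ai2 half0 half1.
lra.
Qed.

(* Each [psi (a_k)] lies below the chord of [psi \o a] through [j] and [l]:
   first [a_k] lies below the chord of [a], then apply monotonicity and
   convexity of [psi]. *)
Lemma comp_below_chord j k l : (1 <= j <= k)%N -> (k <= l <= n)%N ->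
  (j < l)%N -> psi (a k) <= interp R j l (psi \o a) k.
Proof.
move=> jk kl jl.
have [aj ak al] : [/\ a j \in I, a k \in I & a l \in I].
  by split; apply: a_in_I; lia.
have t0 := @weight_ge0 R j l k jl ltac:(lia).
have t1 := @weight_le1 R j l k jl ltac:(lia).
apply: le_trans (psi_convex _ _ _ al aj t0 t1).
apply: psi_mono _ _ ak (itv_convex_comb al aj t0 t1) _.
exact: convex_seq_below_chord a_convex j k l jk kl jl.
Qed.

End ConvexNondecreasingImage.

Lemma Phi_interp {R : realType} {n} {p a : nat -> R} {psi} {u v} : (u < v)%N ->
  Phi n p a psi u v = \sum_(1 <= i < n.+1) p i * interp R u v (psi \o a) i.
Proof.
move=> uv; have vu : (v%:R - u%:R : R) != 0 by rewrite subr_eq0 eqr_nat gtn_eqF.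
rewrite /Phi /interp /weight !mulr_suml -big_split /=.
by apply: eq_bigr => i _; field.
Qed.

Lemma mean_index_ge1 {R : realType} {n} {p : nat -> R} :
  (forall i, (1 <= i <= n)%N -> 0 <= p i) -> 0 < Psum n p ->
  1 <= (Psum n p)^-1 * (\sum_(1 <= i < n.+1) p i * i%:R).
Proof.
move=> p0 P0; rewrite ler_pdivlMl // mulr1 /Psum.
apply: ler_sum_nat => i ibnd.
by rewrite ler_peMr ?p0 // ler1n; case/andP: ibnd.
Qed.

Lemma floor_index_bounds {R : realType} {x : R} {n} : 1 <= x -> x < n%:R ->
  (1 <= `|Num.floor x|%N < n)%N.
Proof.
move=> x1 xn.
have fl1 : 1 <= Num.floor x by rewrite floor_ge_int.
have fln : Num.floor x < n%:Z.
  by rewrite -(ltr_int R); apply: le_lt_trans (floor_le _) _.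
lia.
Qed.

Theorem corollary4p4 (R : realType) (I : interval R) (psi : R -> R)
    (n : nat) (a p : nat -> R) :
  nondecreasing_on I psi -> convex_on I psi ->
  (2 <= n)%N ->
  (forall i, (1 <= i <= n)%N -> a i \in I) ->
  convex_seq n a ->
  (forall i, (1 <= i <= n)%N -> 0 <= p i) ->
  0 < Psum n p ->
  (Psum n p)^-1 * (\sum_(1 <= i < n.+1) p i * i%:R) < n%:R ->
  let m := `|Num.floor ((Psum n p)^-1 * (\sum_(1 <= i < n.+1) p i * i%:R))|%N in
  Phi n p a psi m m.+1 <= \sum_(1 <= i < n.+1) p i * psi (a i)
  /\ \sum_(1 <= i < n.+1) p i * psi (a i) <= Phi n p a psi 1 n.
Proof.
move=> psi_mono psi_convex n2 a_in_I a_convex p0 P0 mean_lt_n m.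
have /andP[m1 mn] : (1 <= m < n)%N.
  exact: floor_index_bounds (mean_index_ge1 p0 P0) mean_lt_n.
have psia_convex := convex_seq_comp psi_mono psi_convex a_in_I a_convex.
rewrite (Phi_interp (ltnSn m)) (Phi_interp (n2 : (1 < n)%N)).
split; apply: ler_sum_nat => i ibnd; apply: (ler_wpM2l (p0 i ibnd)).
- exact: convex_seq_above_secant psia_convex m i m1 mn ibnd.
- by apply: (comp_below_chord psi_mono psi_convex a_in_I a_convex 1 i n); lia.
Qed.
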